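(* The class of line-graphs of bipartite multigraphs is closed under the following two operations: (1) deletion of a flat edge; (2) addition of a new vertex whose neighborhood is a maximal clique of the graph.
   Context: The line-graph of a multigraph $B$ has the edges of $B$ as vertices, two being adjacent iff they share an endpoint in $B$. An edge of a graph is flat if it is contained in no triangle. *)

From mathcomp Require Import all_boot.
Set Implicit Arguments. Unset Strict Implicit. Unset Printing Implicit Defensive.

(* A bipartite multigraph B with sides X and Y and edge set T is given by the
   endpoint maps l : T -> X and r : T -> Y (every edge joins a vertex of X to a
   vertex of Y; parallel edges are distinct elements of T with the same
   endpoints). *)

(* g is (isomorphic to -- here identical to, up to naming the edges of B by the
   vertices of g) the line-graph of a bipartite multigraph *)
Definition is_line_bip (T : finType) (g : rel T) : Prop :=
  exists (X Y : finType) (l : T -> X) (r : T -> Y),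
    forall u v : T, g u v = (u != v) && ((l u == l v) || (r u == r v)).

Definition flat_edge (T : finType) (g : rel T) (a b : T) : Prop :=
  g a b /\ ~ (exists c : T, g a c && g b c).

Definition del_edge (T : finType) (g : rel T) (a b : T) : rel T :=
  fun x y => g x y && ~~ (((x == a) && (y == b)) || ((x == b) && (y == a))).

Definition is_clique (T : finType) (g : rel T) (K : {set T}) : bool :=
  [forall x in K, forall y in K, (x != y) ==> g x y].

Definition maximal_clique (T : finType) (g : rel T) (K : {set T}) : Prop :=
  is_clique g K /\ forall K' : {set T}, K \subset K' -> is_clique g K' -> K' = K.

Definition add_vertex (T : finType) (g : rel T) (K : {set T}) : rel (option T) :=
  fun x y => match x, y with
             | Some u, Some v => g u v
             | None, Some v => v \in K
             | Some u, None => u \in K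
             | None, None => false
             end.

(* Let g be the line graph of a bipartite multigraph B whose edges have
   endpoints l u and r u.  Adjacent vertices a, b of g are edges of B sharing
   an endpoint; if {a, b} is flat, no third edge of B uses a shared endpoint,
   so re-attaching b to a fresh copy of each endpoint it shares with a
   deletes exactly the edge {a, b} of g.  A clique of g is a set of pairwise
   meeting edges of B; as B has no triangles, it lies in the star of a single
   vertex, so a maximal clique is a whole star (or empty).  Adding to B a new
   edge from the centre of that star to a fresh vertex adds a vertex to g
   whose neighbourhood is exactly the clique. *)

From mathcomp Require Import all_boot.
Set Implicit Arguments. Unset Strict Implicit. Unset Printing Implicit Defensive.

Lemma cliqueP (T : finType) (g : rel T) (K : {set T}) :
  reflect {in K &, forall x y, x != y -> g x y} (is_clique g K).
Proof.
apply: (iffP forall_inP) => [cK x y /cK /forall_inP cx /cx /implyP // | cK x xK].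
by apply/forall_inP => y yK; apply/implyP; apply: cK.
Qed.

Section Detach.

Variables (T : finType) (Z : eqType) (f : T -> Z) (a b : T).

Definition detach (u : T) : option Z :=
  if (u == b) && (f a == f b) then None else Some (f u).

Lemma detach_other u v : u != b -> v != b -> (detach u == detach v) = (f u == f v).
Proof. by move=> /negbTE ub /negbTE vb; rewrite /detach ub vb (inj_eq Some_inj). Qed.

Lemma detach_b_a : a != b -> (detach b == detach a) = false.
Proof.
move=> /negbTE ab; rewrite /detach ab eqxx /=.
by case: ifP => // fab; rewrite (inj_eq Some_inj) eq_sym.
Qed.

Lemma detach_b_other v :
    (f a = f b -> f v = f b -> (v == a) || (v == b)) ->
  v != a -> v != b -> (detach b == detach v) = (f b == f v).
Proof.
move=> priv /negbTE va /negbTE vb; rewrite /detach vb eqxx /=.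
case: ifP => [/eqP fab|_]; last by rewrite (inj_eq Some_inj).
by apply/esym/negbTE/eqP => fbv; move: (priv fab (esym fbv)); rewrite va vb.
Qed.

End Detach.

Section LineGraphOfBipartiteMultigraph.

Variables (T X Y : finType) (l : T -> X) (r : T -> Y) (g : rel T).
Hypothesis gE : forall u v, g u v = (u != v) && ((l u == l v) || (r u == r v)).

Lemma flat_edge_end_private (Z : eqType) (f : T -> Z) a b v :
    (forall u w, f u = f w -> (l u == l w) || (r u == r w)) ->
    flat_edge g a b -> f a = f b -> f v = f b -> (v == a) || (v == b).
Proof.
move=> fE [_ no_common] fab fvb; apply/negPn/negP; rewrite negb_or => /andP[va vb].
apply: no_common; exists v.
by rewrite !gE (eq_sym a) (eq_sym b) va vb !fE // fvb.
Qed.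

Lemma del_flat_edge_line_bip a b : flat_edge g a b -> is_line_bip (del_edge g a b).
Proof.
move=> flat; have ab : a != b by case: flat => /[!gE] /andP[].
have priv_l v : l a = l b -> l v = l b -> (v == a) || (v == b).
  by apply: flat_edge_end_private flat => u w ->; rewrite eqxx.
have priv_r v : r a = r b -> r v = r b -> (v == a) || (v == b).
  by apply: flat_edge_end_private flat => u w ->; rewrite eqxx orbT.
have adj_b v : v != b -> ((l b == l v) || (r b == r v)) && (v != a) =
    (detach l a b b == detach l a b v) || (detach r a b b == detach r a b v).
  move=> vb; have [->|va] := eqVneq v a; first by rewrite /= andbF !detach_b_a.
  by rewrite /= andbT (detach_b_other (priv_l v)) ?(detach_b_other (priv_r v)).
exists (option X), (option Y), (detach l a b), (detach r a b) => u v.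
rewrite /del_edge gE.
have [->|ub] := eqVneq u b; have [->|vb] := eqVneq v b; rewrite ?eqxx //=.
- by rewrite andbF /= adj_b.
- rewrite andbT orbF !(eq_sym (detach _ _ _ u)) -adj_b //.
  by rewrite andbA (eq_sym (l u)) (eq_sym (r u)).
- by rewrite !andbF /= andbT !detach_other.
Qed.

Lemma star_l_clique x : is_clique g [set u | l u == x].
Proof. by apply/cliqueP => u v /[!inE] /eqP lu /eqP lv uv; rewrite gE uv lu lv eqxx. Qed.

Lemma star_r_clique y : is_clique g [set u | r u == y].
Proof. by apply/cliqueP => u v /[!inE] /eqP ru /eqP rv uv; rewrite gE uv ru rv eqxx orbT. Qed.

Lemma clique_sub_star K k : is_clique g K -> k \in K ->
  K \subset [set u | l u == l k] \/ K \subset [set u | r u == r k].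
Proof.
move=> /cliqueP cK kK.
have [/forall_inP allL|/forall_inPn [k' k'K lk'k]] := boolP [forall u in K, l u == l k].
  by left; apply/subsetP => u /allL; rewrite inE.
have k'k : k' != k by apply: contraNneq lk'k => ->.
have rk'k : r k' == r k by move: (cK _ _ k'K kK k'k); rewrite gE k'k (negbTE lk'k).
right; apply/subsetP => u uK; rewrite inE.
have [luk|luk] := eqVneq (l u) (l k).
  have uk' : u != k' by apply: contra_neq lk'k => <-; rewrite luk.
  by move: (cK _ _ uK k'K uk'); rewrite gE uk' luk eq_sym (negbTE lk'k) (eqP rk'k).
have uk : u != k by apply: contra_neq luk => ->.
by move: (cK _ _ uK kK uk); rewrite gE uk (negbTE luk).
Qed.

(* [None] stands for a vertex outside the multigraph. *)
Definition edges_meeting (ox : option X) (oy : option Y) : {set T} :=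
  [set v | (Some (l v) == ox) || (Some (r v) == oy)].

Lemma maximal_clique_edges_meeting K :
  maximal_clique g K -> exists ox oy, K = edges_meeting ox oy.
Proof.
move=> [cK maxK]; have [->|[k kK]] := set_0Vmem K.
  by exists None, None; apply/setP => v; rewrite !inE.
have [KsubL|KsubR] := clique_sub_star cK kK.
  exists (Some (l k)), None; rewrite -(maxK _ KsubL (star_l_clique _)).
  by apply/setP => v; rewrite !inE orbF.
exists None, (Some (r k)); rewrite -(maxK _ KsubR (star_r_clique _)).
by apply/setP => v; rewrite !inE.
Qed.

Lemma add_vertex_edges_meeting_line_bip ox oy :
  is_line_bip (add_vertex g (edges_meeting ox oy)).
Proof.
exists (option X), (option Y),
  (fun o => if o is Some u then Some (l u) else ox),
  (fun o => if o is Some u then Some (r u) else oy).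
move=> [u|] [v|] /=; rewrite ?inE.
- by rewrite gE.
- by [].
- by rewrite (eq_sym ox) (eq_sym oy).
- by [].
Qed.

End LineGraphOfBipartiteMultigraph.

Theorem lemma5 :
  (forall (T : finType) (g : rel T) (a b : T),
      is_line_bip g -> flat_edge g a b -> is_line_bip (del_edge g a b)) /\
  (forall (T : finType) (g : rel T) (K : {set T}),
      is_line_bip g -> maximal_clique g K -> is_line_bip (add_vertex g K)).
Proof.
split.
- move=> T g a b [X [Y [l [r gE]]]]; exact: (del_flat_edge_line_bip gE).
- move=> T g K [X [Y [l [r gE]]]] /(maximal_clique_edges_meeting gE) [ox [oy ->]].
  exact: (add_vertex_edges_meeting_line_bip gE).
Qed.
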